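(* In the upper half-space model $\mathbb{H}^3=\{x_3>0\}$ with metric $\frac{1}{x_3^2}(dx_1^2+dx_2^2+dx_3^2)$, let $E$ be a complete end of revolution about the $x_3$-axis with profile curve $\gamma:[0,\infty)\to\mathbb{H}^3$, $\gamma(s)=(\gamma_1(s),0,\gamma_2(s))$, parametrized by hyperbolic arc length, $\gamma_1>0$. If $E$ is non-parabolic, then $\sup_{s\in[0,\infty)}\gamma_1(s)<\infty$.
   Context: $E=\{(\gamma_1(s)\cos\theta,\gamma_1(s)\sin\theta,\gamma_2(s)): s\ge0,\theta\in[0,2\pi)\}$ with the induced metric; arc length parametrization means $(\dot\gamma_1^2+\dot\gamma_2^2)/\gamma_2^2=1$. An end is parabolic if every bounded harmonic function on it is determined by its boundary values. *)

From Stdlib Require Import Reals.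
From Coquelicot Require Import Coquelicot.
Open Scope R_scope.

(* A function on [0,oo) that is smooth up to the boundary point 0
   (all derivatives exist at every s >= 0; at s = 0 this uses a
   neighbourhood, i.e. g extends smoothly a little past 0). *)
Definition smooth_on_halfline (g : R -> R) : Prop :=
  forall (n : nat) (x : R), 0 <= x -> ex_derive_n g n x.

(* Profile curve gamma(s) = (g1 s, 0, g2 s) in the upper half-space model,
   smooth, with g1 > 0, g2 > 0 (inside H^3), parametrized by hyperbolic
   arc length: (g1'^2 + g2'^2) / g2^2 = 1. *)
Definition rev_end_profile (g1 g2 : R -> R) : Prop :=
  smooth_on_halfline g1 /\ smooth_on_halfline g2 /\
  (forall s, 0 <= s -> 0 < g1 s /\ 0 < g2 s) /\
  (forall s, 0 <= s ->
     ((Derive g1 s) ^ 2 + (Derive g2 s) ^ 2) / (g2 s) ^ 2 = 1).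

(* In coordinates (s, theta), the induced metric on E is
   ds^2 + w(s)^2 dtheta^2 with warping function w = g1 / g2
   (hyperbolic radius of the circle of rotation). *)
Definition warp (g1 g2 : R -> R) (s : R) : R := g1 s / g2 s.

Definition cont2 (h : R -> R -> R) (s t : R) : Prop :=
  continuous (fun p : R * R => h (fst p) (snd p)) (s, t).

Definition C2_interior (u us ut uss ust utt : R -> R -> R) : Prop :=
  forall s t, 0 < s ->
    is_derive (fun x => u x t) s (us s t) /\
    is_derive (fun y => u s y) t (ut s t) /\
    is_derive (fun x => us x t) s (uss s t) /\
    is_derive (fun y => us s y) t (ust s t) /\
    is_derive (fun y => ut s y) t (utt s t) /\
    cont2 u s t /\ cont2 us s t /\ cont2 ut s t /\
    cont2 uss s t /\ cont2 ust s t /\ cont2 utt s t.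

(* Laplace-Beltrami equation for ds^2 + w^2 dtheta^2:
   u_ss + (w'/w) u_s + u_tt / w^2 = 0. *)
Definition harmonic_interior (g1 g2 : R -> R) (u : R -> R -> R) : Prop :=
  exists us ut uss ust utt : R -> R -> R,
    C2_interior u us ut uss ust utt /\
    forall s t, 0 < s ->
      uss s t + (Derive (warp g1 g2) s / warp g1 g2 s) * us s t
        + utt s t / (warp g1 g2 s) ^ 2 = 0.

(* A bounded harmonic function on the end E (including its boundary
   circle s = 0): a function of (s, theta), 2pi-periodic in theta,
   continuous on [0,oo) x R, bounded, harmonic in the interior. *)
Definition bounded_harmonic_on_end (g1 g2 : R -> R) (u : R -> R -> R) : Prop :=
  (forall s t, 0 <= s -> u s (t + 2 * PI) = u s t) /\
  (forall s t, 0 <= s -> forall eps, 0 < eps -> exists delta, 0 < delta /\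
     forall s' t', 0 <= s' -> Rabs (s' - s) < delta -> Rabs (t' - t) < delta ->
       Rabs (u s' t' - u s t) < eps) /\
  (exists M, forall s t, 0 <= s -> Rabs (u s t) <= M) /\
  harmonic_interior g1 g2 u.

Definition parabolic_end (g1 g2 : R -> R) : Prop :=
  forall u v : R -> R -> R,
    bounded_harmonic_on_end g1 g2 u -> bounded_harmonic_on_end g1 g2 v ->
    (forall t, u 0 t = v 0 t) ->
    forall s t, 0 <= s -> u s t = v s t.

(* Write w = g1 / g2 for the warping function of the metric ds^2 + w^2 dt^2 and
   P(s) = int_0^s 1/w for the rotationally symmetric harmonic function with
   P(0) = 0.  Arc length parametrization gives g1' <= g2, i.e. (ln g1)' <= 1/w,
   so ln g1(s) - ln g1(0) <= P(s): if g1 is unbounded, so is P.  Then E is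
   parabolic.  Let h be the difference of two bounded harmonic functions with
   equal boundary values and suppose h(s0,t0) = a > 0.  The radial operator
   f'' + (w'/w) f' kills P and sends P^2 to 2/w^2 > 0, so h - eps P + del P^2 is
   strictly subharmonic and attains its maximum over a strip [0,S] x circle on
   the boundary.  Taking eps P(s0) small, S so large that eps P(S) beats sup h,
   and del P(S)^2 small makes the boundary values smaller than the value at
   (s0,t0), a contradiction. *)

From Stdlib Require Import Reals Lra Classical ClassicalEpsilon.
From Coquelicot Require Import Coquelicot.
Open Scope R_scope.

Lemma is_derive_pos_locally_increasing (f : R -> R) (x l : R) :
  is_derive f x l -> 0 < l ->
  exists k, 0 < k /\ forall t, 0 < t < k -> f (x - t) < f x < f (x + t).
Proof.
  intros Hd Hl. apply is_derive_Reals in Hd.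
  destruct (Hd l Hl) as [k Hk]. exists k. split; [apply cond_pos|].
  assert (Hq : forall h, h <> 0 -> Rabs h < k -> 0 < (f (x + h) - f x) / h).
  { intros h Hh0 Hh. specialize (Hk h Hh0 Hh). apply Rabs_def2 in Hk. lra. }
  intros t Ht. split.
  - assert (Hm := Hq (- t) ltac:(lra) ltac:(rewrite Rabs_Ropp, Rabs_pos_eq; lra)).
    replace (x - t) with (x + - t) by ring.
    assert (E : f (x + - t) - f x = - ((f (x + - t) - f x) / - t * t)) by (field; lra).
    nra.
  - assert (Hp := Hq t ltac:(lra) ltac:(rewrite Rabs_pos_eq; lra)).
    assert (E : f (x + t) - f x = (f (x + t) - f x) / t * t) by (field; lra).
    nra.
Qed.

Lemma local_max_derive_eq0 (f : R -> R) (x r l : R) : 0 < r ->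
  (forall y, x - r < y < x + r -> f y <= f x) -> is_derive f x l -> l = 0.
Proof.
  intros Hr Hmax Hd.
  destruct (Rtotal_order l 0) as [Hneg | [Hz | Hpos]]; [exfalso | exact Hz | exfalso].
  - destruct (is_derive_pos_locally_increasing (fun y => - f y) x (- l))
      as [k [Hk Hinc]]; [exact (is_derive_opp f x l Hd) | lra |].
    set (t := Rmin k r / 2).
    assert (Ht : 0 < t < k /\ t < r) by (unfold t, Rmin; destruct Rle_dec; lra).
    specialize (Hinc t ltac:(lra)). specialize (Hmax (x - t) ltac:(lra)). lra.
  - destruct (is_derive_pos_locally_increasing f x l Hd Hpos) as [k [Hk Hinc]].
    set (t := Rmin k r / 2).
    assert (Ht : 0 < t < k /\ t < r) by (unfold t, Rmin; destruct Rle_dec; lra).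
    specialize (Hinc t ltac:(lra)). specialize (Hmax (x + t) ltac:(lra)). lra.
Qed.

Lemma local_max_second_derive_le0 (f f' : R -> R) (x r l : R) : 0 < r ->
  (forall y, x - r < y < x + r -> f y <= f x) ->
  (forall y, x - r < y < x + r -> is_derive f y (f' y)) ->
  is_derive f' x l -> l <= 0.
Proof.
  intros Hr Hmax Hd Hd2. apply Rnot_lt_le. intros Hpos.
  assert (H0 : f' x = 0) by (apply (local_max_derive_eq0 f x r); auto; apply Hd; lra).
  destruct (is_derive_pos_locally_increasing f' x l Hd2 Hpos) as [k [Hk Hinc]].
  set (b := Rmin k r / 2).
  assert (Hb : 0 < b < k /\ b < r) by (unfold b, Rmin; destruct Rle_dec; lra).
  destruct (MVT_cor2 f f' x (x + b)) as [c [Hmvt Hc]]; [lra | |].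
  - intros c Hc. apply is_derive_Reals, Hd. lra.
  - assert (Hfc : 0 < f' c).
    { rewrite <- H0. replace c with (x + (c - x)) by ring. apply Hinc. lra. }
    specialize (Hmax (x + b) ltac:(lra)). nra.
Qed.

Lemma continuity_2d_attains_max (G : R -> R -> R) a b c d : a <= b -> c <= d ->
  (forall x y, continuity_2d_pt G x y) ->
  exists xm ym, a <= xm <= b /\ c <= ym <= d /\
    forall x y, a <= x <= b -> c <= y <= d -> G x y <= G xm ym.
Proof.
  intros Hab Hcd HG.
  assert (Hrow : forall x, exists y, c <= y <= d /\ forall y', c <= y' <= d -> G x y' <= G x y).
  { intros x. destruct (continuity_ab_maj (G x) c d Hcd) as [y [Hy1 Hy2]]; [|now exists y].
    intros y _. apply continuity_pt_locally. intros eps.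
    destruct (HG x y eps) as [del Hdel]. exists del. intros v Hv. apply Hdel; [|exact Hv].
    rewrite Rminus_diag, Rabs_R0. apply cond_pos. }
  destruct (choice _ Hrow) as [ym Hym].
  destruct (continuity_ab_maj (fun x => G x (ym x)) a b Hab) as [xm [Hxm1 Hxm2]].
  - intros z Hz. apply continuity_pt_locally. intros eps.
    destruct (uniform_continuity_2d G (a - 1) (b + 1) c d (fun x y _ _ => HG x y) eps)
      as [del Hdel].
    exists (mkposreal _ (Rmin_pos del 1 (cond_pos del) Rlt_0_1)). simpl. intros y Hy.
    change (Rabs (y - z) < Rmin del 1) in Hy.
    assert (Hyz : Rabs (y - z) < del /\ Rabs (y - z) < 1)
      by (split; eapply Rlt_le_trans; eauto; [apply Rmin_l | apply Rmin_r]).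
    assert (Hy' : a - 1 <= y <= b + 1) by (destruct Hyz as [_ H1]; apply Rabs_def2 in H1; lra).
    destruct (Hym y) as [Hy1 Hy2]. destruct (Hym z) as [Hz1 Hz2].
    assert (K1 := Hdel z (ym z) y (ym z) ltac:(lra) Hz1 Hy' Hz1 (proj1 Hyz)
      ltac:(rewrite Rminus_diag, Rabs_R0; apply cond_pos)).
    assert (K2 := Hdel y (ym y) z (ym y) Hy' Hy1 ltac:(lra) Hy1
      ltac:(rewrite Rabs_minus_sym; apply Hyz) ltac:(rewrite Rminus_diag, Rabs_R0; apply cond_pos)).
    specialize (Hy2 (ym z) Hz1). specialize (Hz2 (ym y) Hy1).
    apply Rabs_def2 in K1. apply Rabs_def2 in K2. apply Rabs_def1; lra.
  - exists xm, (ym xm). destruct (Hym xm) as [Hy1 _]. repeat split; try lra.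
    intros x y Hx Hy. apply Rle_trans with (G x (ym x)); [now apply Hym | now apply Hxm1].
Qed.

Lemma Rabs_Rmax0_le x y : Rabs (Rmax 0 x - Rmax 0 y) <= Rabs (x - y).
Proof. unfold Rmax, Rabs. repeat destruct Rle_dec; repeat destruct Rcase_abs; lra. Qed.

Lemma halfplane_continuity_2d (u : R -> R -> R) :
  (forall s t, 0 <= s -> forall eps, 0 < eps -> exists delta, 0 < delta /\
     forall s' t', 0 <= s' -> Rabs (s' - s) < delta -> Rabs (t' - t) < delta ->
       Rabs (u s' t' - u s t) < eps) ->
  forall x y, continuity_2d_pt (fun s t => u (Rmax 0 s) t) x y.
Proof.
  intros Hu x y eps.
  destruct (Hu (Rmax 0 x) y (Rmax_l 0 x) eps (cond_pos eps)) as [del [Hdel K]].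
  exists (mkposreal del Hdel). simpl. intros s t Hs Ht. apply K; [apply Rmax_l | | exact Ht].
  eapply Rle_lt_trans; [apply Rabs_Rmax0_le | exact Hs].
Qed.

Lemma periodic_shift_interior (f : R -> R) p c t : 0 < p ->
  (forall x, f (x + p) = f x) -> c - p <= t <= c + p ->
  exists t', c - p < t' < c + p /\ f t' = f t.
Proof.
  intros Hp Hper Ht.
  destruct (Req_dec t (c - p)) as [-> | Hl]; [exists c; split; [lra |] |].
  { rewrite <- (Hper (c - p)). f_equal. ring. }
  destruct (Req_dec t (c + p)) as [-> | Hr]; [exists c; split; [lra | now rewrite Hper] |].
  exists t. split; [lra | reflexivity].
Qed.

Lemma harmonic_interior_minus (g1 g2 : R -> R) (u v : R -> R -> R) :
  harmonic_interior g1 g2 u -> harmonic_interior g1 g2 v ->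
  harmonic_interior g1 g2 (fun s t => u s t - v s t).
Proof.
  intros [us [ut [uss [ust [utt [HCu Hu]]]]]] [vs [vt [vss [vst [vtt [HCv Hv]]]]]].
  exists (fun s t => us s t - vs s t), (fun s t => ut s t - vt s t),
    (fun s t => uss s t - vss s t), (fun s t => ust s t - vst s t),
    (fun s t => utt s t - vtt s t).
  split; intros s t Hs.
  - destruct (HCu s t Hs) as (Du1 & Du2 & Du3 & Du4 & Du5 & Cu0 & Cu1 & Cu2 & Cu3 & Cu4 & Cu5).
    destruct (HCv s t Hs) as (Dv1 & Dv2 & Dv3 & Dv4 & Dv5 & Cv0 & Cv1 & Cv2 & Cv3 & Cv4 & Cv5).
    unfold cont2 in *. repeat match goal with |- _ /\ _ => split end;
      first [ now apply (is_derive_minus (K := R_AbsRing) (V := R_NormedModule))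
            | now apply (continuous_minus (V := R_NormedModule)) ].
  - specialize (Hu s t Hs). specialize (Hv s t Hs). lra.
Qed.

Section Profile.

Variables g1 g2 : R -> R.
Hypothesis Hprof : rev_end_profile g1 g2.

Lemma profile_ex_derive s : 0 <= s -> ex_derive g1 s /\ ex_derive g2 s.
Proof. destruct Hprof as [H1 [H2 _]]. intros Hs. exact (conj (H1 1%nat s Hs) (H2 1%nat s Hs)). Qed.

Lemma profile_pos s : 0 <= s -> 0 < g1 s /\ 0 < g2 s.
Proof. destruct Hprof as [_ [_ [H _]]]. exact (H s). Qed.

Lemma Derive_profile1_le s : 0 <= s -> Derive g1 s <= g2 s.
Proof.
  intros Hs. destruct Hprof as [_ [_ [_ Harc]]]. specialize (Harc s Hs).
  destruct (profile_pos s Hs) as [_ H2].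
  assert (E : Derive g1 s ^ 2 + Derive g2 s ^ 2 = g2 s ^ 2).
  { rewrite <- (Rmult_1_l (g2 s ^ 2)), <- Harc. field. lra. }
  nra.
Qed.

Lemma warp_ex_derive s : 0 <= s -> ex_derive (warp g1 g2) s.
Proof.
  intros Hs. destruct (profile_ex_derive s Hs), (profile_pos s Hs).
  apply ex_derive_div; auto; lra.
Qed.

Lemma warp_pos s : 0 <= s -> 0 < warp g1 g2 s.
Proof. intros Hs. destruct (profile_pos s Hs). now apply Rdiv_lt_0_compat. Qed.

(* The absolute value only extends the integrand continuously to [s < 0]. *)
Definition inv_warp (s : R) : R := / warp g1 g2 (Rabs s).
Definition potential (s : R) : R := RInt inv_warp 0 s.

Lemma inv_warp_pos s : 0 < inv_warp s.
Proof. apply Rinv_0_lt_compat, warp_pos, Rabs_pos. Qed.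

Lemma inv_warp_continuous (s : R) : continuous inv_warp s.
Proof.
  apply (continuous_Rinv_comp (fun x => warp g1 g2 (Rabs x))).
  - exact (continuous_comp Rabs (warp g1 g2) s (continuous_Rabs s)
      (ex_derive_continuous _ _ (warp_ex_derive _ (Rabs_pos s)))).
  - apply Rgt_not_eq, warp_pos, Rabs_pos.
Qed.

Lemma potential_derive s : is_derive potential s (inv_warp s).
Proof.
  apply is_derive_RInt with (a := 0); [| apply inv_warp_continuous].
  apply filter_forall. intros b.
  apply (RInt_correct inv_warp), ex_RInt_continuous. intros; apply inv_warp_continuous.
Qed.

Lemma potential_ex_derive s : ex_derive potential s.
Proof. exists (inv_warp s). apply potential_derive. Qed.

Lemma potential0 : potential 0 = 0.
Proof. unfold potential. now rewrite RInt_point. Qed.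

Lemma potential_nondecreasing s s' : s <= s' -> potential s <= potential s'.
Proof.
  intros Hss'. destruct (Rle_lt_or_eq_dec s s' Hss') as [Hlt | ->]; [left | now right].
  apply (incr_function potential m_infty p_infty inv_warp); simpl; auto.
  - intros; apply potential_derive.
  - intros; apply inv_warp_pos.
Qed.

Lemma inv_warp_eq s : 0 <= s -> inv_warp s = g2 s / g1 s.
Proof.
  intros Hs. destruct (profile_pos s Hs).
  unfold inv_warp, warp. rewrite Rabs_pos_eq by exact Hs. field. lra.
Qed.

Lemma ln_profile_le_potential s : 0 <= s -> ln (g1 s) - ln (g1 0) <= potential s.
Proof.
  intros Hs. destruct (Rle_lt_or_eq_dec 0 s Hs) as [Hpos | <-];
    [| rewrite potential0; lra].
  set (dh := fun y => Derive g1 y / g1 y - inv_warp y).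
  destruct (MVT_cor2 (fun y => ln (g1 y) - potential y) dh 0 s Hpos) as [c [Hmvt Hc]].
  - intros y Hy. apply is_derive_Reals.
    destruct (profile_ex_derive y ltac:(lra)) as [D1 _]. destruct (profile_pos y ltac:(lra)) as [P1 _].
    apply (is_derive_minus (fun y => ln (g1 y))); [| apply potential_derive].
    exact (is_derive_comp ln g1 y _ _ (is_derive_ln (g1 y) P1) (Derive_correct _ _ D1)).
  - assert (Hdh : dh c <= 0).
    { unfold dh. rewrite inv_warp_eq by lra. destruct (profile_pos c ltac:(lra)).
      unfold Rdiv. apply Rle_minus, Rmult_le_compat_r;
        [left; now apply Rinv_0_lt_compat | apply Derive_profile1_le; lra]. }
    rewrite potential0 in Hmvt. nra.
Qed.

Lemma potential_unbounded :
  (forall M, exists s, 0 <= s /\ M < g1 s) -> forall L, exists s, 0 <= s /\ L < potential s.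
Proof.
  intros Hunb L. destruct (profile_pos 0 (Rle_refl 0)) as [H10 _].
  destruct (Hunb (g1 0 * exp L)) as [s [Hs Hlt]]. exists s. split; [exact Hs|].
  assert (Hl : ln (g1 0 * exp L) < ln (g1 s)).
  { apply ln_increasing; [apply Rmult_lt_0_compat; [lra | apply exp_pos] | exact Hlt]. }
  rewrite ln_mult, ln_exp in Hl by (try apply exp_pos; lra).
  pose proof (ln_profile_le_potential s Hs). lra.
Qed.

Lemma inv_warp_derive s : 0 < s ->
  is_derive inv_warp s (- (Derive (warp g1 g2) s / warp g1 g2 s) * inv_warp s).
Proof.
  intros Hs. apply is_derive_ext_loc with (f := fun y => / warp g1 g2 y).
  - apply locally_interval with (a := 0) (b := p_infty); [exact Hs | exact I |].
    intros y Hy _. simpl in Hy. unfold inv_warp. now rewrite Rabs_pos_eq by lra.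
  - assert (Hw := warp_pos s ltac:(lra)).
    replace (- (Derive (warp g1 g2) s / warp g1 g2 s) * inv_warp s)
      with (- Derive (warp g1 g2) s / warp g1 g2 s ^ 2)
      by (unfold inv_warp; rewrite Rabs_pos_eq by lra; field; lra).
    apply is_derive_inv; [apply Derive_correct, warp_ex_derive; lra | lra].
Qed.

Definition barrier (eps del s : R) : R :=
  del * (potential s * potential s) - eps * potential s.

Definition barrier' (eps del s : R) : R := (2 * del * potential s - eps) * inv_warp s.

Lemma barrier_derive eps del s : is_derive (barrier eps del) s (barrier' eps del s).
Proof.
  unfold barrier. auto_derive; [repeat split; apply potential_ex_derive |].
  replace (Derive (fun x => potential x) s) with (inv_warp s)
    by (symmetry; apply is_derive_unique, potential_derive).
  unfold barrier'. ring.
Qed.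

(* The radial Laplacian of the barrier is [2 del / w^2 > 0]. *)
Lemma barrier'_derive eps del s : 0 < s ->
  is_derive (barrier' eps del) s
    (- (Derive (warp g1 g2) s / warp g1 g2 s) * barrier' eps del s
     + 2 * del * inv_warp s ^ 2).
Proof.
  intros Hs. unfold barrier'. auto_derive.
  - repeat split; [apply potential_ex_derive | eexists; now apply inv_warp_derive].
  - replace (Derive (fun x => potential x) s) with (inv_warp s)
      by (symmetry; apply is_derive_unique, potential_derive).
    replace (Derive (fun x => inv_warp x) s)
      with (- (Derive (warp g1 g2) s / warp g1 g2 s) * inv_warp s)
      by (symmetry; now apply is_derive_unique, inv_warp_derive).
    ring.
Qed.

Lemma barrier_no_interior_max (h : R -> R -> R) eps del s t r :
  harmonic_interior g1 g2 h -> 0 < del -> 0 < r <= s ->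
  (forall x, s - r < x < s + r -> h x t + barrier eps del x <= h s t + barrier eps del s) ->
  (forall y, t - r < y < t + r -> h s y <= h s t) ->
  False.
Proof.
  intros [hs [ht [hss [hst [htt [HC Hlap]]]]]] Hdel Hr Hmax_s Hmax_t.
  assert (Hd_s : forall x, s - r < x < s + r ->
    is_derive (fun x => h x t + barrier eps del x) x (hs x t + barrier' eps del x)).
  { intros x Hx. apply (is_derive_plus (fun x => h x t)); [apply HC; lra | apply barrier_derive]. }
  assert (Hd_ss : is_derive (fun x => hs x t + barrier' eps del x) s
    (hss s t + (- (Derive (warp g1 g2) s / warp g1 g2 s) * barrier' eps del s
                + 2 * del * inv_warp s ^ 2))).
  { apply (is_derive_plus (fun x => hs x t)); [apply HC | apply barrier'_derive]; lra. }
  assert (Hcrit : hs s t + barrier' eps del s = 0).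
  { apply (local_max_derive_eq0 (fun x => h x t + barrier eps del x) s r);
      [lra | exact Hmax_s | apply Hd_s; lra]. }
  assert (Hconc_s := local_max_second_derive_le0 _ _ s r _ ltac:(lra) Hmax_s Hd_s Hd_ss).
  assert (Hconc_t : htt s t <= 0).
  { apply (local_max_second_derive_le0 (h s) (ht s) t r); [lra | exact Hmax_t | |];
      [intros y _ |]; apply HC; lra. }
  specialize (Hlap s t ltac:(lra)).
  set (k := Derive (warp g1 g2) s / warp g1 g2 s) in *.
  assert (Hk : k * (hs s t + barrier' eps del s) = 0) by (rewrite Hcrit; ring).
  assert (Hw : 0 < / warp g1 g2 s ^ 2).
  { apply Rinv_0_lt_compat. pose proof (warp_pos s ltac:(lra)). nra. }
  assert (Htt : htt s t / warp g1 g2 s ^ 2 <= 0) by (unfold Rdiv; nra).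
  assert (Hq : 0 < del * inv_warp s ^ 2)
    by (apply Rmult_lt_0_compat; [lra | apply pow_lt, inv_warp_pos]).
  nra.
Qed.

Lemma barrier_continuity_pt (eps del s : R) : continuity_pt (barrier eps del) s.
Proof.
  apply continuity_pt_filterlim.
  exact (ex_derive_continuous (barrier eps del) s (ex_intro _ _ (barrier_derive eps del s))).
Qed.

Lemma barrier_strip_max_principle (h : R -> R -> R) eps del S K :
  harmonic_interior g1 g2 h -> 0 < del -> 0 <= S ->
  (forall s t, 0 <= s -> h s (t + 2 * PI) = h s t) ->
  (forall x y, continuity_2d_pt (fun s t => h (Rmax 0 s) t) x y) ->
  (forall t, h 0 t + barrier eps del 0 <= K) ->
  (forall t, h S t + barrier eps del S <= K) ->
  forall s t, 0 <= s <= S -> h s t + barrier eps del s <= K.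
Proof.
  intros Hh Hdel HS Hper Hcont H0 HSK s t Hs.
  pose proof PI_RGT_0 as Hpi.
  set (G := fun x y => h (Rmax 0 x) y + barrier eps del x).
  assert (HG : forall x y, 0 <= x -> G x y = h x y + barrier eps del x)
    by (intros x y Hx; unfold G; now rewrite Rmax_right).
  destruct (continuity_2d_attains_max G 0 S (t - 2 * PI) (t + 2 * PI))
    as [sm [tm [Hsm [Htm Hmax]]]]; [lra | lra | |].
  { intros x y. apply continuity_2d_pt_plus; [apply Hcont |].
    apply (continuity_1d_2d_pt_comp _ (fun u _ => u));
      [apply barrier_continuity_pt | apply continuity_2d_pt_id1]. }
  rewrite <- HG by lra. apply Rle_trans with (G sm tm); [apply Hmax; lra |].
  rewrite HG by lra.
  destruct (Req_dec sm 0) as [-> | Hsm0]; [apply H0 |].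
  destruct (Req_dec sm S) as [-> | HsmS]; [apply HSK |].
  exfalso.
  destruct (periodic_shift_interior (h sm) (2 * PI) t tm) as [tm' [Htm' Heq]];
    [lra | intros; apply Hper; lra | lra |].
  set (r := Rmin (Rmin sm (S - sm)) (Rmin (tm' - (t - 2 * PI)) (t + 2 * PI - tm'))).
  assert (Hr : 0 < r /\ r <= sm /\ r <= S - sm /\ r <= tm' - (t - 2 * PI) /\ r <= t + 2 * PI - tm').
  { unfold r, Rmin. repeat destruct Rle_dec; lra. }
  apply (barrier_no_interior_max h eps del sm tm' r Hh Hdel); [lra | |].
  - intros x Hx. rewrite Heq, <- !HG by lra. apply Hmax; lra.
  - intros y Hy. rewrite Heq.
    assert (Hy' := Hmax sm y ltac:(lra) ltac:(lra)). rewrite !HG in Hy' by lra. lra.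
Qed.

Lemma harmonic_le0_of_potential_unbounded (h : R -> R -> R) M :
  (forall L, exists s, 0 <= s /\ L < potential s) ->
  harmonic_interior g1 g2 h ->
  (forall s t, 0 <= s -> h s (t + 2 * PI) = h s t) ->
  (forall x y, continuity_2d_pt (fun s t => h (Rmax 0 s) t) x y) ->
  (forall s t, 0 <= s -> h s t <= M) ->
  (forall t, h 0 t <= 0) ->
  forall s t, 0 <= s -> h s t <= 0.
Proof.
  intros Hpot Hh Hper Hcont HM H0 s0 t0 Hs0. apply Rnot_lt_le. intros Ha.
  assert (HM0 : 0 < M + 1) by (specialize (HM s0 t0 Hs0); lra).
  set (a := h s0 t0) in Ha.
  assert (HP0 : 0 <= potential s0) by (rewrite <- potential0; now apply potential_nondecreasing).
  (* [eps P(s0) <= a/3], [eps P(S) > M + 1] and [del P(S)^2 <= a/3] make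
     [h + barrier] at most [a/3] on both boundary circles of the strip [0,S]
     but at least [2a/3] at [(s0,t0)]. *)
  set (eps := a / (3 * (potential s0 + 1))).
  assert (Heps : 0 < eps) by (unfold eps; apply Rdiv_lt_0_compat; lra).
  assert (Heps_s0 : eps * (potential s0 + 1) = a / 3) by (unfold eps; field; lra).
  destruct (Hpot ((M + 1) / eps + potential s0)) as [S [HS HSlt]].
  assert (HeS : M + 1 + eps * potential s0 < eps * potential S).
  { assert (E : (M + 1) / eps * eps = M + 1) by (field; lra). nra. }
  assert (Hs0S : s0 <= S).
  { apply Rnot_lt_le. intros HSs0. pose proof (potential_nondecreasing S s0 ltac:(lra)). nra. }
  set (del := a / (3 * (potential S * potential S + 1))).
  assert (Hdel : 0 < del) by (unfold del; apply Rdiv_lt_0_compat; nra).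
  assert (Hdel_S : del * (potential S * potential S + 1) = a / 3) by (unfold del; field; nra).
  assert (Hbd := barrier_strip_max_principle h eps del S (a / 3) Hh Hdel HS Hper Hcont).
  specialize (Hbd ltac:(intros t; unfold barrier; rewrite potential0; specialize (H0 t); lra)).
  specialize (Hbd ltac:(intros t; unfold barrier; specialize (HM S t HS); nra)).
  specialize (Hbd s0 t0 (conj Hs0 Hs0S)). unfold barrier in Hbd.
  assert (0 <= del * (potential s0 * potential s0)) by (apply Rmult_le_pos; nra).
  fold a in Hbd. nra.
Qed.

Lemma bounded_harmonic_le (u v : R -> R -> R) :
  (forall L, exists s, 0 <= s /\ L < potential s) ->
  bounded_harmonic_on_end g1 g2 u -> bounded_harmonic_on_end g1 g2 v ->
  (forall t, u 0 t = v 0 t) -> forall s t, 0 <= s -> u s t <= v s t.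
Proof.
  intros Hpot [Pu [Cu [[Mu HMu] Hu]]] [Pv [Cv [[Mv HMv] Hv]]] H0 s t Hs.
  apply Rminus_le.
  apply (harmonic_le0_of_potential_unbounded (fun s t => u s t - v s t) (Mu + Mv) Hpot);
    [now apply harmonic_interior_minus | | | | | exact Hs].
  - intros s' t' Hs'. now rewrite Pu, Pv.
  - intros x y. apply continuity_2d_pt_minus; now apply halfplane_continuity_2d.
  - intros s' t' Hs'. specialize (HMu s' t' Hs'). specialize (HMv s' t' Hs').
    pose proof (Rle_abs (u s' t')). pose proof (Rle_abs (- v s' t')).
    rewrite Rabs_Ropp in *. lra.
  - intros t'. rewrite H0. lra.
Qed.

End Profile.

Theorem proposition5p1 (g1 g2 : R -> R) :
  rev_end_profile g1 g2 ->
  ~ parabolic_end g1 g2 ->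
  exists M : R, forall s : R, 0 <= s -> g1 s <= M.
Proof.
  intros Hprof Hnonpar. apply NNPP. intros Hunb. apply Hnonpar.
  assert (Hg1 : forall M, exists s, 0 <= s /\ M < g1 s).
  { intros M. apply NNPP. intros Hno. apply Hunb. exists M. intros s Hs.
    apply Rnot_lt_le. intros Hlt. apply Hno. now exists s. }
  assert (Hpot := potential_unbounded g1 g2 Hprof Hg1).
  intros u v Hu Hv H0 s t Hs. apply Rle_antisym.
  - exact (bounded_harmonic_le g1 g2 Hprof u v Hpot Hu Hv H0 s t Hs).
  - exact (bounded_harmonic_le g1 g2 Hprof v u Hpot Hv Hu (fun t => eq_sym (H0 t)) s t Hs).
Qed.
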